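(* Let $(A,d,\Delta)$ be a mixed chain complex over a field. If it satisfies the $d\Delta$-condition then it is semi-classical, and if it is semi-classical then it admits non-commutative Hodge-to-de Rham degeneration data.
   Context: A mixed chain complex is a graded vector space $A$ with two anticommuting square-zero operators $d$ of degree $-1$ and $\Delta$ of degree $+1$. The $d\Delta$-condition is $\mathrm{Ker}\,d\cap\mathrm{Ker}\,\Delta\cap(\mathrm{Im}\,d+\mathrm{Im}\,\Delta)=\mathrm{Im}\,d\Delta=\mathrm{Im}\,\Delta d$. The complex is semi-classical if every homology class of $(A,d)$ has a representative in $\mathrm{Ker}\,\Delta$. Non-commutative Hodge-to-de Rham degeneration data is a deformation retract $p:(A,d)\to(H(A),0)$, $i:(H(A),0)\to(A,d)$, $h$ of degree $1$ on $A$, with $pi=\mathrm{id}$, $\mathrm{id}_A-ip=dh+hd$, such that $p(\Delta h)^{m-1}\Delta i=0$ for all $m\ge1$. *)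

From HB Require Import structures.
From mathcomp Require Import all_boot all_order all_algebra.
Set Implicit Arguments. Unset Strict Implicit. Unset Printing Implicit Defensive.
Import Order.TTheory GRing.Theory Num.Theory.
Local Open Scope ring_scope.

(* A homogeneous linear map of degree k from A to B is encoded as a family
   [f : forall n m : int, {linear A n -> B m}] of linear maps between all
   pairs of components, subject to [f n m = 0] whenever [m <> n + k].
   (This avoids type casts such as A (n+1-1) vs A n.)  The composite
   g o f of a degree-k map f with g is the family
   [fun n m x => g (n + k) m (f n (n + k) x)]. *)

Record mixed_complex (K : fieldType) := MixedComplex {
  mc_A : int -> lmodType K;
  mc_d : forall n m : int, {linear mc_A n -> mc_A m};
  mc_D : forall n m : int, {linear mc_A n -> mc_A m};
  mc_d_deg : forall (n m : int) (x : mc_A n), m != n - 1 -> mc_d n m x = 0;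
  mc_D_deg : forall (n m : int) (x : mc_A n), m != n + 1 -> mc_D n m x = 0;
  mc_dd : forall (n : int) (x : mc_A n), mc_d (n - 1) (n - 1 - 1) (mc_d n (n - 1) x) = 0;
  mc_DD : forall (n : int) (x : mc_A n), mc_D (n + 1) (n + 1 + 1) (mc_D n (n + 1) x) = 0;
  mc_anti : forall (n : int) (x : mc_A n),
     mc_d (n + 1) n (mc_D n (n + 1) x) + mc_D (n - 1) n (mc_d n (n - 1) x) = 0
}.

Local Unset Implicit Arguments.
Section Conditions.
Variable K : fieldType.
Variable C : mixed_complex K.
Local Notation A := (mc_A C).
Local Notation d := (mc_d C).
Local Notation D := (mc_D C).

(* The dDelta-condition, stated degreewise (all operators are homogeneous):
   Ker d ∩ Ker Δ ∩ (Im d + Im Δ) = Im dΔ = Im Δd  in each degree n. *)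
Definition dDelta_condition : Prop :=
  forall (n : int) (x : A n),
    ((d n (n - 1) x = 0 /\ D n (n + 1) x = 0 /\
      exists (y : A (n + 1)) (z : A (n - 1)), x = d (n + 1) n y + D (n - 1) n z)
     <-> exists w : A n, x = d (n + 1) n (D n (n + 1) w))
    /\ ((exists w : A n, x = d (n + 1) n (D n (n + 1) w))
        <-> exists w : A n, x = D (n - 1) n (d n (n - 1) w)).

Definition semi_classical : Prop :=
  forall (n : int) (x : A n), d n (n - 1) x = 0 ->
    exists (y : A n) (z : A (n + 1)), D n (n + 1) y = 0 /\ x - y = d (n + 1) n z.

(* For h of degree +1, [dh_iter h j] is the map (Δ h)^j Δ, of degree 2j+1. *)
Fixpoint dh_iter (h : forall n m : int, A n -> A m) (j : nat) (n m : int) : A n -> A m :=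
  match j with
  | 0%N => fun x => D n m x
  | j'.+1 => fun x =>
      D (n + (j'.*2.+2)%:Z) m
        (h (n + (j'.*2.+1)%:Z) (n + (j'.*2.+2)%:Z)
           (dh_iter h j' n (n + (j'.*2.+1)%:Z) x))
  end.

(* Non-commutative Hodge-to-de Rham degeneration data: a deformation retract
   (p, i, h) of (A, d) onto a graded vector space H with zero differential
   (necessarily H ≅ H(A,d)), p, i of degree 0, h of degree 1, with
   p i = id, id - i p = d h + h d, and p (Δ h)^(m-1) Δ i = 0 for m >= 1. *)
Definition has_HdR_degeneration_data : Prop :=
  exists (H : int -> lmodType K)
         (p : forall n m : int, {linear A n -> H m})
         (i : forall n m : int, {linear H n -> A m})
         (h : forall n m : int, {linear A n -> A m}),
    (forall n m (x : A n), m != n -> p n m x = 0) /\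
        (forall n m (y : H n), m != n -> i n m y = 0) /\
        (forall n m (x : A n), m != n + 1 -> h n m x = 0) /\
        (* p and i are chain maps (the differential of H is 0) *)
        (forall n (x : A n), p (n - 1) (n - 1) (d n (n - 1) x) = 0) /\
        (forall n (y : H n), d n (n - 1) (i n n y) = 0) /\
        (forall n (y : H n), p n n (i n n y) = y) /\
        (forall n (x : A n),
           x - i n n (p n n x) = d (n + 1) n (h n (n + 1) x) + h (n - 1) n (d n (n - 1) x)) /\
      (* p (Δ h)^(m-1) Δ i = 0 for all m >= 1, with j = m - 1 *)
        (forall (j : nat) n (y : H n),
           p (n + (j.*2.+1)%:Z) (n + (j.*2.+1)%:Z)
             (dh_iter (fun a b => h a b) j n (n + (j.*2.+1)%:Z) (i n n y)) = 0).

End Conditions.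

(* If dx = 0 then Delta x is d-closed (d and Delta anticommute), Delta-closed
   and Delta-exact, so the dDelta-condition puts it in Im Delta d:
   Delta x = Delta d w, and x - d w is a Delta-closed representative of the
   class of x.
   Semi-classicality in turn lets one split Ker d = S (+) Im d in each
   degree with S inside Ker Delta; choosing also A = Ker d (+) W (complements
   come from Zorn's lemma, the A n being possibly infinite dimensional),
   H := S, p := the projection onto S along Im d (+) W, i := the inclusion and
   h := the inverse of d : W -> Im d after the projection onto Im d form a
   deformation retract. As i lands in Ker Delta, every p (Delta h)^(m-1) Delta i
   vanishes. *)

From HB Require Import structures.
From mathcomp Require Import all_boot all_order all_algebra.
From mathcomp Require Import boolp classical_sets zify.
Set Implicit Arguments. Unset Strict Implicit. Unset Printing Implicit Defensive.
Import GRing.Theory.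
Local Open Scope ring_scope.
Local Open Scope classical_set_scope.

Section Subspaces.
Variables (K : fieldType) (V : lmodType K).
Implicit Types (X Y : set V) (u v x y : V).

Definition subspace X := X 0 /\ forall a x y, X x -> X y -> X (a *: x + y).

Definition sumset X Y := [set x + y | x in X & y in Y].

Definition direct_sum X Y :=
  [/\ subspace X, subspace Y, X `&` Y `<=` [set 0] & forall v, sumset X Y v].

Section SubspaceTheory.
Variables (X : set V) (HX : subspace X).

Lemma subspaceD x y : X x -> X y -> X (x + y).
Proof. by move=> Xx Xy; have := HX.2 1 x y Xx Xy; rewrite scale1r. Qed.

Lemma subspaceZ a x : X x -> X (a *: x).
Proof. by move=> Xx; have := HX.2 a x 0 Xx HX.1; rewrite addr0. Qed.

Lemma subspaceN x : X x -> X (- x).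
Proof. by move=> Xx; rewrite -scaleN1r; exact: subspaceZ. Qed.

Lemma subspaceB x y : X x -> X y -> X (x - y).
Proof. by move=> Xx Xy; apply: subspaceD => //; exact: subspaceN. Qed.

End SubspaceTheory.

Lemma subspaceI X Y : subspace X -> subspace Y -> subspace (X `&` Y).
Proof.
move=> HX HY; split; first by split; [exact: HX.1 | exact: HY.1].
by move=> a u v [Xu Yu] [Xv Yv]; split; [exact: HX.2 | exact: HY.2].
Qed.

Lemma subspace_sumset X Y : subspace X -> subspace Y -> subspace (sumset X Y).
Proof.
move=> HX HY; split.
  by exists 0; [exact: HX.1 | exists 0; [exact: HY.1 | rewrite addr0]].
move=> a _ _ [x1 X1 [y1 Y1 <-]] [x2 X2 [y2 Y2 <-]].
exists (a *: x1 + x2); first exact: HX.2.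
by exists (a *: y1 + y2); [exact: HY.2 | rewrite scalerDr addrACA].
Qed.

Lemma sumsetC X Y : sumset X Y = sumset Y X.
Proof.
by apply/seteqP; split=> _ [x Xx [y Yy <-]]; exists y => //; exists x => //; rewrite addrC.
Qed.

(* Zorn's lemma is applied to sets closed under [a *: x + y] rather than to
   subspaces, because the union of the empty chain is empty. *)
Lemma exists_complement X : subspace X -> exists Y, direct_sum X Y.
Proof.
move=> HX.
pose closed Y := forall a x y, Y x -> Y y -> Y (a *: x + y).
pose P Y := closed Y /\ X `&` Y `<=` [set 0].
have [Y [[clY XY0] Ymax]] : exists Y, P Y /\ forall Y', Y `<` Y' -> ~ P Y'.
  apply: Zorn_bigcup => F FP Ftot; split.
    move=> a x y [Y1 FY1 Y1x] [Y2 FY2 Y2y].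
    have [Y12|Y21] := Ftot _ _ FY1 FY2.
    - by exists Y2 => //; apply: (FP _ FY2).1 => //; exact: Y12.
    - by exists Y1 => //; apply: (FP _ FY1).1 => //; exact: Y21.
  by move=> x [Xx [Y' FY' Y'x]]; apply: (FP _ FY').2.
have Y0 : Y 0.
  have [[y Yy]|noY] := pselect (exists y, Y y).
    by have := clY (-1) y y Yy Yy; rewrite scaleN1r addNr.
  exfalso; apply: (Ymax [set 0]).
  - split=> [y Yy|sub0]; first by exfalso; apply: noY; exists y.
    by apply: noY; exists 0; apply: sub0.
  - by split=> [a _ _ -> ->|x [_ ->]]; rewrite ?scaler0 ?addr0.
exists Y; split=> // v; apply: contrapT => Nv.
have Nyv : ~ Y v.
  by move=> Yv; apply: Nv; exists 0; [exact: HX.1 | exists v; rewrite ?add0r].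
apply: (Ymax [set y + c *: v | y in Y & c in [set: K]]).
  split; first by move=> y Yy; exists y => //; exists 0 => //; rewrite scale0r addr0.
  by move=> /(_ v) Y'v; apply/Nyv/Y'v; exists 0 => //; exists 1; rewrite ?scale1r ?add0r.
split.
  move=> a _ _ [y1 Y1 [c1 _ <-]] [y2 Y2 [c2 _ <-]].
  exists (a *: y1 + y2); first exact: clY.
  by exists (a * c1 + c2) => //; rewrite scalerDr scalerDl scalerA addrACA.
move=> x [Xx [y Yy [c _ ex]]].
have [c0|c0] := eqVneq c 0.
  by apply: XY0; split=> //; rewrite -ex c0 scale0r addr0.
exfalso; apply: Nv; exists (c^-1 *: x); first exact: subspaceZ.
exists (- (c^-1 *: y)); first by apply: subspaceN => //; exact: subspaceZ.
by rewrite -ex scalerDr scalerA mulVf // scale1r addrAC subrr add0r.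
Qed.

Lemma exists_relative_complement X U : subspace X -> subspace U -> X `<=` U ->
  exists Y, [/\ subspace Y, Y `<=` U, X `&` Y `<=` [set 0] & U `<=` sumset X Y].
Proof.
move=> HX HU XU; have [Y0 [_ HY0 XY0 spanXY0]] := exists_complement HX.
exists (Y0 `&` U); split=> [||x [Xx [Y0x _]]|u Uu]; first exact: subspaceI.
- by move=> y [].
- exact: XY0.
have [x Xx [y Y0y exy]] := spanXY0 u.
exists x => //; exists y => //; split=> //.
have -> : y = u - x by rewrite -exy addrC addKr.
exact: subspaceB (XU _ Xx).
Qed.

Lemma direct_sum_split X1 X2 Y : subspace X1 -> subspace X2 ->
  X1 `&` X2 `<=` [set 0] -> direct_sum (sumset X1 X2) Y ->
  direct_sum X1 (sumset X2 Y).
Proof.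
move=> H1 H2 X12 [_ HY XY spanXY]; split=> // [|x [X1x [x2 X2x2 [y Yy exy]]]|v].
- exact: subspace_sumset.
- have y0 : y = 0.
    apply: XY; split=> //; exists x => //; exists (- x2); first exact: subspaceN.
    by rewrite -exy addrC addKr.
  by apply: X12; split=> //; rewrite -exy y0 addr0.
have [_ [x1 X1x1 [x2 X2x2 <-]] [y Yy <-]] := spanXY v.
by exists x1 => //; exists (x2 + y); [exists x2 => //; exists y | rewrite addrA].
Qed.

Section Projection.
Variables (X Y : set V) (XY : direct_sum X Y).

Definition proj v := xget 0 [set u | X u /\ Y (v - u)].

Lemma projP v : X (proj v) /\ Y (v - proj v).
Proof.
apply: (@xgetPex _ 0 (fun u => X u /\ Y (v - u))).
case: XY => _ _ _ /(_ v) [x Xx [y Yy <-]].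
by exists x; rewrite addrC addKr.
Qed.

Lemma proj_eq v u : X u -> Y (v - u) -> proj v = u.
Proof.
case: XY (projP v) => HX HY XY0 _ [Xp Yp] Xu Yu.
apply/eqP; rewrite -subr_eq0; apply/eqP.
apply: XY0; split; first exact: subspaceB.
have -> : proj v - u = (v - u) - (v - proj v).
  by rewrite opprB [RHS]addrC [RHS]addrA subrK.
exact: subspaceB.
Qed.

Lemma proj_id x : X x -> proj x = x.
Proof. by move=> Xx; apply: proj_eq; rewrite // subrr; case: XY => _ []. Qed.

Lemma proj_null y : Y y -> proj y = 0.
Proof. by move=> Yy; apply: proj_eq; [case: XY => [[]] | rewrite subr0]. Qed.

Lemma proj_linear : linear proj.
Proof.
move=> a x y; have [Xx Yx] := projP x; have [Xy Yy] := projP y.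
case: XY => HX HY _ _; apply: proj_eq; first exact: HX.2.
have -> : a *: x + y - (a *: proj x + proj y) = a *: (x - proj x) + (y - proj y).
  by rewrite scalerBr opprD addrACA.
exact: HY.2.
Qed.

End Projection.

Lemma proj_complement X Y Z v :
  direct_sum X (sumset Y Z) -> direct_sum Y (sumset X Z) ->
  Z (v - proj X (sumset Y Z) v - proj Y (sumset X Z) v).
Proof.
move=> XYZ YXZ; have [_ [y Yy [z Zz eyz]]] := projP XYZ v.
suff -> : proj Y (sumset X Z) v = y by rewrite -eyz addrC addKr.
apply: proj_eq => //; exists (proj X (sumset Y Z) v); first exact: (projP XYZ v).1.
exists z => //; rewrite -[v in RHS](subrK (proj X (sumset Y Z) v)) -eyz.
by rewrite addrC [RHS]addrAC [y + z]addrC addrK.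
Qed.

End Subspaces.

Section PreimageIn.
Variables (K : fieldType) (U V : lmodType K) (W : set U) (f : {linear U -> V}).
Hypotheses (HW : subspace W) (f_inj : forall w, W w -> f w = 0 -> w = 0).

Definition preimage_in v := xget 0 (fun w => W w /\ f w = v).

Lemma preimage_in_eq w v : W w -> f w = v -> preimage_in v = w.
Proof.
move=> Ww fw; have /(xgetPex 0) [Wp fp] : exists w, W w /\ f w = v by exists w.
apply/eqP; rewrite -subr_eq0; apply/eqP; apply: f_inj; first exact: subspaceB.
by rewrite linearB /= fp fw subrr.
Qed.

End PreimageIn.

Section GradedCast.
Local Unset Implicit Arguments.
Variables (K : fieldType) (F : int -> lmodType K).

Definition castg n m (x : F n) : F m :=
  if @eqP _ n m is ReflectT e then eq_rect n F x m e else 0.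

Lemma castg_id n (x : F n) : castg n n x = x.
Proof. by rewrite /castg; case: eqP => // e; rewrite (eq_irrelevance e erefl). Qed.

Lemma castg_ne n m (x : F n) : m != n -> castg n m x = 0.
Proof. by rewrite /castg eq_sym; case: eqP. Qed.

Lemma castg_is_linear n m : linear (castg n m).
Proof.
move=> a x y; rewrite /castg; case: eqP => [e|_]; last by rewrite scaler0 addr0.
by case: m / e.
Qed.

HB.instance Definition _ n m :=
  GRing.isLinear.Build K (F n) (F m) *:%R (castg n m) (castg_is_linear n m).

End GradedCast.
Arguments castg {K} F n m x.

Definition linear_map (K : fieldType) (U V : lmodType K) (f : U -> V)
  of linear f := f.
HB.instance Definition _ (K : fieldType) (U V : lmodType K) f (fL : linear f) :=
  GRing.isLinear.Build K U V *:%R (@linear_map K U V f fL) fL.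

Section SubspaceType.
Variables (K : fieldType) (V : lmodType K) (X : set V).

(* The unused proof argument is what lets the submodule structure below be
   found by unification on [subspace_mem HX]. *)
Definition subspace_mem of subspace X : pred V := fun x => x \in X.

Variable HX : subspace X.

Lemma subspace_mem_closed : submod_closed (subspace_mem HX).
Proof.
split=> [|a u v]; rewrite /subspace_mem !inE; first exact: HX.1.
exact: HX.2.
Qed.

HB.instance Definition _ :=
  GRing.isSubmodClosed.Build K V (subspace_mem HX) subspace_mem_closed.

Definition subspace_type := {x : V | subspace_mem HX x}.

HB.instance Definition _ := [isSub of subspace_type for @sval V (subspace_mem HX)].
HB.instance Definition _ := [Choice of subspace_type by <:].
HB.instance Definition _ := [SubChoice_isSubLmodule of subspace_type by <:].

End SubspaceType.

Section MixedComplex.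
Variables (K : fieldType) (C : mixed_complex K).
Local Notation A := (mc_A C).
Local Notation d := (mc_d C).
Local Notation D := (mc_D C).

(* Off-degree components of d and Delta vanish, so quantifying over the target
   degree avoids casts between A (n - 1 + 1) and A n. *)
Definition cycles n : set (A n) := [set x | forall m, d n m x = 0].
Definition boundaries n : set (A n) := [set x | exists z : A (n + 1), x = d (n + 1) n z].
Definition Dclosed n : set (A n) := [set x | forall m, D n m x = 0].
Arguments cycles : clear implicits.
Arguments boundaries : clear implicits.
Arguments Dclosed : clear implicits.

Lemma mc_ddE k n m (x : A k) : d n m (d k n x) = 0.
Proof.
have [->|nk] := eqVneq n (k - 1); last by rewrite (mc_d_deg _ nk) linear0.
have [->|mk] := eqVneq m (k - 1 - 1); [exact: mc_dd | exact: mc_d_deg].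
Qed.

Lemma cycles_d k n (x : A n) : n = k + 1 -> d n k x = 0 -> cycles n x.
Proof.
move=> nk dx m; have [->//|mk] := eqVneq m k.
by apply: mc_d_deg; rewrite nk addrK.
Qed.

Lemma Dclosed_D n (x : A n) : D n (n + 1) x = 0 -> Dclosed n x.
Proof. by move=> Dx m; have [->//|mn] := eqVneq m (n + 1); exact: mc_D_deg. Qed.

Lemma boundaries_d k n (z : A k) : boundaries n (d k n z).
Proof.
have [e|kn] := eqVneq k (n + 1); first by subst k; exists z.
by exists 0; rewrite linear0 mc_d_deg //; lia.
Qed.

Lemma boundaries_cycles n : boundaries n `<=` cycles n.
Proof. by move=> _ [z ->] m; rewrite mc_ddE. Qed.

Lemma subspace_cycles n : subspace (cycles n).
Proof. by split=> [m|a x y dx dy m]; rewrite ?linear0 // linearP dx dy scaler0 addr0. Qed.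

Lemma subspace_Dclosed n : subspace (Dclosed n).
Proof. by split=> [m|a x y Dx Dy m]; rewrite ?linear0 // linearP Dx Dy scaler0 addr0. Qed.

Lemma subspace_boundaries n : subspace (boundaries n).
Proof.
split=> [|a _ _ [z1 ->] [z2 ->]]; first by exists 0; rewrite linear0.
by exists (a *: z1 + z2); rewrite linearP.
Qed.

Lemma semi_classical_of_dDelta : dDelta_condition K C -> semi_classical K C.
Proof.
move=> dDelta n x dx; pose u := D n (n + 1) x.
have du : d (n + 1) n u = 0 by have := mc_anti x; rewrite dx linear0 addr0.
(* the dDelta-condition in degree [n + 1] is stated on [A (n + 1 - 1)], which
   is [A n] only up to a propositional equality *)
have [closed_exact exact_swap] := dDelta (n + 1) u.
move: (n + 1 - 1) (addrK 1 n) closed_exact exact_swap => k e; subst k.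
move=> closed_exact exact_swap.
have [w uDdw] : exists w : A (n + 1), u = D n (n + 1) (d (n + 1) n w).
  apply/exact_swap/closed_exact; split=> //; split; first exact: mc_DD.
  by exists 0, x; rewrite linear0 add0r.
exists (x - d (n + 1) n w), w; split; last by rewrite opprB addrC subrK.
by rewrite linearB /= -uDdw subrr.
Qed.

Lemma exists_harmonic_complement : semi_classical K C -> forall n,
  exists S : set (A n), [/\ subspace S, S `<=` cycles n `&` Dclosed n,
    S `&` boundaries n `<=` [set 0] & cycles n `<=` sumset S (boundaries n)].
Proof.
move=> SC n.
have [S [HS SZD BS0 ZDspan]] := exists_relative_complement
  (subspaceI (subspace_boundaries n) (subspace_Dclosed n))
  (subspaceI (subspace_cycles n) (subspace_Dclosed n))
  (fun x '(conj Bx Dx) => conj (boundaries_cycles Bx) Dx).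
exists S; split=> // [x [Sx Bx]|z Zz].
  by apply: BS0; split=> //; split=> //; exact: (SZD _ Sx).2.
have [y [t [/Dclosed_D Dy ezy]]] := SC n z (Zz (n - 1)).
have Zy : cycles n y.
  have -> : y = z - d (n + 1) n t by rewrite -ezy opprB addrC subrK.
  apply: (subspaceB (subspace_cycles n) Zz).
  exact: boundaries_cycles (boundaries_d _ _).
have [b [Bb _] [s Ss eys]] := ZDspan y (conj Zy Dy).
exists s => //; exists (b + d (n + 1) n t).
  by apply: (subspaceD (subspace_boundaries n) Bb); exact: boundaries_d.
by rewrite addrA (addrC s) eys -ezy addrC subrK.
Qed.

Lemma dh_iter_Dclosed (h : forall n m, A n -> A m) j n m (x : A n) :
  (forall a b, h a b 0 = 0) -> Dclosed n x -> dh_iter K C h j n m x = 0.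
Proof.
move=> h0 Dx; elim: j m => [|j IHj] m /=; first exact: Dx.
by rewrite IHj h0 linear0.
Qed.

Section Splitting.
Variables S W : forall n, set (A n).
Arguments S : clear implicits.
Arguments W : clear implicits.
Hypotheses (HS : forall n : int, subspace (S n))
  (S_harmonic : forall n : int, S n `<=` cycles n `&` Dclosed n)
  (SB0 : forall n : int, S n `&` boundaries n `<=` [set 0])
  (ZSB : forall n : int, cycles n `<=` sumset (S n) (boundaries n))
  (ZW : forall n : int, direct_sum (cycles n) (W n)).

Lemma cycles_sumset n : cycles n = sumset (S n) (boundaries n).
Proof.
apply/seteqP; split=> [|_ [s Ss [b Bb <-]]]; first exact: ZSB.
apply: (subspaceD (subspace_cycles n)); first exact: (S_harmonic Ss).1.
exact: boundaries_cycles.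
Qed.

Lemma S_direct n : direct_sum (S n) (sumset (boundaries n) (W n)).
Proof.
apply: direct_sum_split (HS n) (subspace_boundaries n) (@SB0 n) _.
by rewrite -cycles_sumset.
Qed.

Lemma boundaries_direct n : direct_sum (boundaries n) (sumset (S n) (W n)).
Proof.
apply: direct_sum_split (subspace_boundaries n) (HS n) _ _.
  by move=> x [Bx Sx]; apply: SB0.
by rewrite -sumsetC -cycles_sumset.
Qed.

Local Notation pS n := (proj (S n) (sumset (boundaries n) (W n))).
Local Notation pB n := (proj (boundaries n) (sumset (S n) (W n))).

Lemma boundaries_dW n b : boundaries n b -> exists2 w, W (n + 1) w & d (n + 1) n w = b.
Proof.
case=> z ->; case: (ZW (n + 1)) => _ _ _ /(_ z) [z0 Zz0 [w Ww <-]].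
by exists w => //; rewrite linearD Zz0 add0r.
Qed.

Definition homotopy n m (x : A n) : A m :=
  if m == n + 1 then preimage_in (W m) (d m n) (pB n x) else 0.
Arguments homotopy : clear implicits.

Lemma homotopy_eq n x w : W (n + 1) w -> d (n + 1) n w = pB n x ->
  homotopy n (n + 1) x = w.
Proof.
move=> Ww dw; rewrite /homotopy eqxx; case: (ZW (n + 1)) => _ HW ZW0 _.
apply: preimage_in_eq => // w' W'w' dw'; apply: ZW0; split=> //.
exact: cycles_d dw'.
Qed.

Lemma homotopyP n (x : A n) :
  W (n + 1) (homotopy n (n + 1) x) /\ d (n + 1) n (homotopy n (n + 1) x) = pB n x.
Proof.
have [w Ww dw] := boundaries_dW (projP (boundaries_direct n) x).1.
by rewrite (homotopy_eq Ww dw).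
Qed.

Lemma homotopy_linear n m : linear (homotopy n m).
Proof.
move=> a x y; have [e|mn] := eqVneq m (n + 1); last first.
  by rewrite /homotopy (negbTE mn) scaler0 addr0.
subst m; have [Wx dx] := homotopyP x; have [Wy dy] := homotopyP y.
apply: homotopy_eq; first by case: (ZW (n + 1)) => _ HW _ _; exact: HW.2.
by rewrite linearP /= dx dy (proj_linear (boundaries_direct n)).
Qed.

Lemma homotopy_formula n x :
  x - pS n x = d (n + 1) n (homotopy n (n + 1) x) + homotopy (n - 1) n (d n (n - 1) x).
Proof.
have -> : homotopy (n - 1) n (d n (n - 1) x) = x - pS n x - pB n x.
  move: (homotopy_eq (n := n - 1)); rewrite subrK; apply.
    exact: proj_complement (S_direct n) (boundaries_direct n).
  have [[Zp _] Bp] := (S_harmonic (projP (S_direct n) x).1,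
    boundaries_cycles (projP (boundaries_direct n) x).1).
  rewrite (proj_id (boundaries_direct _) (boundaries_d _ _)).
  by rewrite !linearB /= Zp Bp !subr0.
by rewrite (homotopyP x).2 [RHS]addrC subrK.
Qed.

Local Notation H n := (subspace_type (HS n)).

Definition harmonic_proj n (x : A n) : H n :=
  exist _ (pS n x) (mem_set (projP (S_direct n) x).1).
Arguments harmonic_proj : clear implicits.

Lemma harmonic_proj_linear n : linear (harmonic_proj n).
Proof. by move=> a x y; apply: val_inj; rewrite /= (proj_linear (S_direct n)). Qed.

Lemma HdR_of_splitting : has_HdR_degeneration_data K C.
Proof.
have pS_boundary n (x : A n) : boundaries n x -> pS n x = 0.
  move=> Bx; apply: (proj_null (S_direct n)).
  by exists x => //; exists 0; [case: (ZW n) => _ [] | rewrite addr0].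
have harmonic n (y : H n) : S n (sval y) := set_mem (valP y).
exists (fun n => H n).
exists (fun n m => castg (fun n => H n) n m \o linear_map (@harmonic_proj_linear n)).
exists (fun n m => castg A n m \o val).
exists (fun n m => linear_map (@homotopy_linear n m)).
split=> [n m x mn|]; first exact: castg_ne.
split=> [n m y mn|]; first exact: castg_ne.
split=> [n m x mn|]; first by rewrite /= /linear_map /homotopy (negbTE mn).
split=> [n x|].
  by rewrite /= castg_id; apply: val_inj; exact: pS_boundary (boundaries_d _ _).
split=> [n y|].
  by rewrite /= castg_id; exact: (S_harmonic (harmonic _ y)).1 (n - 1).
split=> [n y|].
  rewrite /= /linear_map !castg_id; apply: val_inj => /=.
  exact (proj_id (S_direct n) (harmonic _ y)).
split=> [n x|j n y]; first by rewrite /= !castg_id; exact: homotopy_formula.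
rewrite /= dh_iter_Dclosed ?linear0 // => [a b|]; first exact: linear0.
by rewrite castg_id; exact: (S_harmonic (harmonic _ y)).2.
Qed.

End Splitting.

Lemma HdR_of_semi_classical : semi_classical K C -> has_HdR_degeneration_data K C.
Proof.
move=> SC.
have /all_sig[S /all_and4[HS S_harmonic SB0 ZSB]] :=
  fun n => cid (exists_harmonic_complement SC n).
have /all_sig[W ZW] := fun n => cid (exists_complement (subspace_cycles n)).
exact: (HdR_of_splitting HS S_harmonic SB0 ZSB ZW).
Qed.

End MixedComplex.

Theorem mainTheorem17 (K : fieldType) (C : mixed_complex K) :
  (dDelta_condition K C -> semi_classical K C) /\
  (semi_classical K C -> has_HdR_degeneration_data K C).
Proof.
split; [exact: semi_classical_of_dDelta | exact: HdR_of_semi_classical].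
Qed.
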